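(* Let $(\mathcal X_S,\mathcal X_O,\mathcal X_A,\mathfrak p,\mathbf r)$ be a POMDP and $T\in\mathbb Z_+$. For every feasible solution $(\mu,\delta)$ of the MILP (i.e. $(\mu,\delta)\in\mathcal Q^{\mathrm d}(T,\mathcal X_S,\mathcal X_O,\mathcal X_A,\mathfrak p)$) there exist nonnegative variables $(\mu^t_{s'a'soa})$, $t\in\{2,\dots,T\}$, such that the valid inequalities (VI) hold. Moreover, these inequalities are not implied by the linear relaxation: there exist POMDPs and feasible solutions $(\mu,\delta)$ of the linear relaxation of the MILP for which no choice of variables $(\mu^t_{s'a'soa})$ satisfies (VI).
   Context: A POMDP $(\mathcal X_S,\mathcal X_O,\mathcal X_A,\mathfrak p,\mathbf r)$ has finite spaces, initial distribution $p(s)$, emission probabilities $p(o|s)$, transitions $p(s'|s,a)$ and reward $r(s,a,s')$; $T$ is a horizon. A deterministic memoryless policy is $\delta=(\delta^t_{a|o})$ with $\delta^t_{a|o}\in\{0,1\}$, $\sum_a\delta^t_{a|o}=1$. The set $\mathcal Q^{\mathrm d}(T,\mathcal X_S,\mathcal X_O,\mathcal X_A,\mathfrak p)$ consists of pairs $(\mu,\delta)$, $\delta$ deterministic memoryless, and nonnegative $\mu=((\mu^1_s),(\mu^t_{soa}),(\mu^t_{sas'}))_{t\in[T]}$ satisfying for all $s,s',o,a,t$: (i) $\mu^1_s=p(s)$; (ii) $\sum_{o,a}\mu^t_{soa}=\nu^t_s$, where $\nu^1_s:=\mu^1_s$ and $\nu^t_s:=\sum_{s'',a''}\mu^{t-1}_{s''a''s}$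 for $t\ge2$; (iii) $\sum_{\bar s}\mu^t_{sa\bar s}=\sum_o\mu^t_{soa}$; (iv) $\mu^t_{sas'}=p(s'|s,a)\sum_{\bar s}\mu^t_{sa\bar s}$; (McCormick) $\mu^t_{soa}\le p(o|s)\nu^t_s$, $\mu^t_{soa}\le\delta^t_{a|o}$, $\mu^t_{soa}\ge p(o|s)\nu^t_s+\delta^t_{a|o}-1$. The MILP is $\max\sum_{t}\sum_{s,a,s'}r(s,a,s')\mu^t_{sas'}$ over $\mathcal Q^{\mathrm d}$; its linear relaxation replaces $\delta^t_{a|o}\in\{0,1\}$ by $\delta^t_{a|o}\in[0,1]$ (keeping $\sum_a\delta^t_{a|o}=1$). Valid inequalities (VI): for all $t\in\{2,\dots,T\}$, $s,s'\in\mathcal X_S$, $o\in\mathcal X_O$, $a,a'\in\mathcal X_A$: $\sum_{s',a'}\mu^t_{s'a'soa}=\mu^t_{soa}$; $\sum_a\mu^t_{s'a'soa}=p(o|s)\mu^{t-1}_{s'a's}$; $\mu^t_{s'a'soa}=p(s|s',a',o)\sum_{\bar s}\mu^t_{s'a'\bar soa}$, where $p(s|s',a',o):=\frac{p(o|s)p(s|s',a')}{\sum_{\bar s}p(o|\bar s)p(\bar s|s',a')}$. *)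

From HB Require Import structures.
From mathcomp Require Import all_boot all_order all_algebra.
Set Implicit Arguments. Unset Strict Implicit. Unset Printing Implicit Defensive.
Import Order.TTheory GRing.Theory Num.Theory.
Local Open Scope ring_scope.

Record pomdp (R : realFieldType) (S O A : finType) := Pomdp {
  p_init : S -> R;
  p_emit : S -> O -> R;
  p_trans : S -> A -> S -> R;      (* p(s'|s,a) = p_trans s a s' *)
  reward : S -> A -> S -> R;
  p_init_ge0 : forall s, 0 <= p_init s;
  p_init_sum : \sum_(s : S) p_init s = 1;
  p_emit_ge0 : forall s o, 0 <= p_emit s o;
  p_emit_sum : forall s, \sum_(o : O) p_emit s o = 1;
  p_trans_ge0 : forall s a s', 0 <= p_trans s a s';
  p_trans_sum : forall s a, \sum_(s' : S) p_trans s a s' = 1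
}.

Section Defs.
Variables (R : realFieldType) (S O A : finType) (P : pomdp R S O A) (T : nat).

(* Variables: mu1 s = mu^1_s ; muSOA t s o a = mu^t_{soa} ;
   muSAS t s a s' = mu^t_{sas'} ; delta t o a = delta^t_{a|o}.
   Times t range over [T] = {1,...,T}. *)

Definition nu (mu1 : S -> R) (muSAS : nat -> S -> A -> S -> R) (t : nat) (s : S) : R :=
  if t == 1%N then mu1 s
  else \sum_(s'' : S) \sum_(a'' : A) muSAS t.-1 s'' a'' s.

Definition Q_constraints (mu1 : S -> R) (muSOA : nat -> S -> O -> A -> R)
    (muSAS : nat -> S -> A -> S -> R) (delta : nat -> O -> A -> R) : Prop :=
  (forall s, 0 <= mu1 s) /\
  (forall t, (1 <= t <= T)%N -> forall s o a, 0 <= muSOA t s o a) /\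
  (forall t, (1 <= t <= T)%N -> forall s a s', 0 <= muSAS t s a s') /\
  (forall t, (1 <= t <= T)%N -> forall o, \sum_(a : A) delta t o a = 1) /\
  (forall s, mu1 s = p_init P s) /\
  (forall t, (1 <= t <= T)%N -> forall s,
      \sum_(o : O) \sum_(a : A) muSOA t s o a = nu mu1 muSAS t s) /\
  (forall t, (1 <= t <= T)%N -> forall s a,
      \sum_(sb : S) muSAS t s a sb = \sum_(o : O) muSOA t s o a) /\
  (forall t, (1 <= t <= T)%N -> forall s a s',
      muSAS t s a s' = p_trans P s a s' * \sum_(sb : S) muSAS t s a sb) /\
  (forall t, (1 <= t <= T)%N -> forall s o a,
      muSOA t s o a <= p_emit P s o * nu mu1 muSAS t s /\
      muSOA t s o a <= delta t o a /\
      p_emit P s o * nu mu1 muSAS t s + delta t o a - 1 <= muSOA t s o a).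

Definition Qd mu1 muSOA muSAS delta : Prop :=
  Q_constraints mu1 muSOA muSAS delta /\
  (forall t, (1 <= t <= T)%N -> forall o a, delta t o a = 0 \/ delta t o a = 1).

Definition Q_relax mu1 muSOA muSAS delta : Prop :=
  Q_constraints mu1 muSOA muSAS delta /\
  (forall t, (1 <= t <= T)%N -> forall o a, 0 <= delta t o a <= 1).

(* p(s | s', a', o); convention: value 0 when the denominator is 0
   (MathComp's x / 0 = 0). *)
Definition p_cond (s' : S) (a' : A) (o : O) (s : S) : R :=
  p_emit P s o * p_trans P s' a' s /
  \sum_(sb : S) p_emit P sb o * p_trans P s' a' sb.

Definition VI (muSOA : nat -> S -> O -> A -> R) (muSAS : nat -> S -> A -> S -> R)
    (mu4 : nat -> S -> A -> S -> O -> A -> R) : Prop :=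
  forall t, (2 <= t <= T)%N ->
    (forall s o a, \sum_(s' : S) \sum_(a' : A) mu4 t s' a' s o a = muSOA t s o a) /\
    (forall s' a' s o, \sum_(a : A) mu4 t s' a' s o a
                        = p_emit P s o * muSAS t.-1 s' a' s) /\
    (forall s' a' s o a, mu4 t s' a' s o a
                        = p_cond s' a' o s * \sum_(sb : S) mu4 t s' a' sb o a).

Definition mu4_nonneg (mu4 : nat -> S -> A -> S -> O -> A -> R) : Prop :=
  forall t, (2 <= t <= T)%N -> forall s' a' s o a, 0 <= mu4 t s' a' s o a.

End Defs.

From HB Require Import structures.
From mathcomp Require Import all_boot all_order all_algebra.
From mathcomp Require Import zify ring lra.
Set Implicit Arguments. Unset Strict Implicit. Unset Printing Implicit Defensive.
Import Order.TTheory GRing.Theory Num.Theory.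
Local Open Scope ring_scope.

(* For a deterministic policy the McCormick envelope is exact:
   when delta^t_{a|o} is 0 or 1 the three McCormick inequalities pin
   mu^t_{soa} to the product p(o|s) nu^t_s delta^t_{a|o}.  We therefore take
   the "lifted" variables
       mu^t_{s'a'soa} := p(o|s) mu^{t-1}_{s'a's} delta^t_{a|o},
   and check the three families of (VI): summing over (s',a') gives
   p(o|s) nu^t_s delta^t_{a|o} = mu^t_{soa}; summing over a uses
   sum_a delta = 1; the conditional identity follows from constraint (iv),
   mu^{t-1}_{s'a's} = p(s|s',a') * (mass of (s',a')), and the fact that
   x = (x / sum) * sum for a nonnegative summand x.
   (2) Non-implication.  (VI) force mu^t_{s'a'soa} to be proportional in s to
   p(s|s',a',o); when this conditional law is uniform, mu^t_{soa} cannot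
   depend on s.  A two-state POMDP with uniform laws, T = 2 and the fractional
   policy delta = 1/2 admits a relaxed solution whose mu^2_{soa} does depend
   on s, so it has no (VI) lifting. *)

Lemma mccormick_binary (R : realDomainType) (x y d : R) :
  0 <= x -> d = 0 \/ d = 1 ->
  x <= y -> x <= d -> y + d - 1 <= x -> x = y * d.
Proof. by move=> x_ge0 [->|->]; rewrite ?mulr0 ?mulr1; lra. Qed.

(* A nonnegative summand is recovered from its share of the total; when
   the total vanishes so does the summand, matching the convention x / 0 = 0. *)
Lemma share_of_sum (R : realFieldType) (I : finType) (f : I -> R) (i : I) :
  (forall j, 0 <= f j) -> f i = f i / (\sum_j f j) * \sum_j f j.
Proof.
move=> f_ge0; have [sum0|sumN0] := eqVneq (\sum_j f j) 0; last by rewrite divfK.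
by rewrite (psumr_eq0P (fun j _ => f_ge0 j) sum0) ?mul0r.
Qed.

Section Validity.
Variables (R : realFieldType) (S O A : finType) (P : pomdp R S O A) (T : nat).
Variables (mu1 : S -> R) (muSOA : nat -> S -> O -> A -> R).
Variables (muSAS : nat -> S -> A -> S -> R) (delta : nat -> O -> A -> R).

Definition lifted_mu : nat -> S -> A -> S -> O -> A -> R :=
  fun t s' a' s o a => p_emit P s o * muSAS t.-1 s' a' s * delta t o a.

Lemma nu_inflow t s : t != 1%N ->
  nu mu1 muSAS t s = \sum_(s' : S) \sum_(a' : A) muSAS t.-1 s' a' s.
Proof. by move=> t_neq1; rewrite /nu (negbTE t_neq1). Qed.

Hypothesis feasible : Qd P T mu1 muSOA muSAS delta.

Lemma muSOA_product t s o a : (1 <= t <= T)%N ->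
  muSOA t s o a = p_emit P s o * nu mu1 muSAS t s * delta t o a.
Proof.
move: feasible => [[_ [SOA_ge0 [_ [_ [_ [_ [_ [_ mcc]]]]]]]] binary] tT.
have [le_env [le_delta ge_env]] := mcc t tT s o a.
exact: mccormick_binary (SOA_ge0 t tT s o a) (binary t tT o a) le_env le_delta ge_env.
Qed.

Lemma lifted_mu_nonneg : mu4_nonneg T lifted_mu.
Proof.
move: feasible => [[_ [_ [SAS_ge0 _]]] binary] t tT s' a' s o a.
have tT' : (1 <= t <= T)%N by lia.
rewrite /lifted_mu !mulr_ge0 ?p_emit_ge0 ?SAS_ge0 //; first by lia.
by case: (binary t tT' o a) => ->.
Qed.

Lemma lifted_mu_VI : VI P T muSOA muSAS lifted_mu.
Proof.
move: feasible => [[_ [_ [_ [delta_sum [_ [_ [_ [trans _]]]]]]]] _] t tT.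
have tT' : (1 <= t <= T)%N by lia.
split; [|split].
- move=> s o a; rewrite muSOA_product // nu_inflow; last by lia.
  rewrite mulr_sumr mulr_suml; apply: eq_bigr => s' _.
  by rewrite mulr_sumr mulr_suml.
- by move=> s' a' s o; rewrite /lifted_mu -mulr_sumr delta_sum // mulr1.
- move=> s' a' s o a.
  set M := \sum_(sb : S) muSAS t.-1 s' a' sb.
  set D := \sum_(sb : S) p_emit P sb o * p_trans P s' a' sb.
  have flow sb : muSAS t.-1 s' a' sb = p_trans P s' a' sb * M.
    by rewrite trans //; lia.
  have mass : \sum_(sb : S) lifted_mu t s' a' sb o a = D * M * delta t o a.
    rewrite /D !mulr_suml; apply: eq_bigr => sb _.
    by rewrite /lifted_mu flow; ring.
  have share : p_emit P s o * p_trans P s' a' s = p_cond P s' a' o s * D.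
    rewrite /p_cond /D; apply: share_of_sum => sb.
    by rewrite mulr_ge0 ?p_emit_ge0 ?p_trans_ge0.
  by rewrite mass /lifted_mu flow mulrA share; ring.
Qed.

End Validity.

(* Under (VI), the conditional identity makes mu^t_{s'a'soa} proportional to
   p(s|s',a',o); hence if this law does not distinguish s1 from s2, neither
   does mu^t_{soa}. *)
Lemma VI_state_blind (R : realFieldType) (S O A : finType) (P : pomdp R S O A)
    (T t : nat) (muSOA : nat -> S -> O -> A -> R)
    (muSAS : nat -> S -> A -> S -> R) (mu4 : nat -> S -> A -> S -> O -> A -> R)
    (s1 s2 : S) (o : O) (a : A) :
  VI P T muSOA muSAS mu4 -> (2 <= t <= T)%N ->
  (forall s' a', p_cond P s' a' o s1 = p_cond P s' a' o s2) ->
  muSOA t s1 o a = muSOA t s2 o a.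
Proof.
move=> vi tT same_cond; have [marg [_ cond]] := vi t tT.
rewrite -!marg; apply: eq_bigr => s' _; apply: eq_bigr => a' _.
by rewrite cond [RHS]cond same_cond.
Qed.

Section Counterexample.
Variable R : realFieldType.

Lemma half_ge0 : 0 <= (1 / 2 : R).
Proof. lra. Qed.

Lemma half_sum : \sum_(b : bool) (1 / 2 : R) = 1.
Proof. rewrite big_bool /=; lra. Qed.

Definition uniform_pomdp : pomdp R bool bool bool :=
  @Pomdp R bool bool bool (fun _ => 1/2) (fun _ _ => 1/2) (fun _ _ _ => 1/2)
    (fun _ _ _ => 0)
    (fun _ => half_ge0) half_sum
    (fun _ _ => half_ge0) (fun _ => half_sum)
    (fun _ _ _ => half_ge0) (fun _ _ => half_sum).

(* A relaxed solution with T = 2 and delta = 1/2: at time 2 the action taken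
   in state s is a = s, which no state-blind lifting can reproduce. *)
Definition cex_mu1 : bool -> R := fun _ => 1/2.
Definition cex_muSOA (t : nat) (s o a : bool) : R :=
  if t == 1%N then 1/8 else if s == a then 1/4 else 0.
Definition cex_muSAS (t : nat) (s a s' : bool) : R :=
  1/2 * \sum_(o : bool) cex_muSOA t s o a.
Definition cex_delta (t : nat) (o a : bool) : R := 1/2.

Lemma cex_relaxed :
  Q_relax uniform_pomdp 2%N cex_mu1 cex_muSOA cex_muSAS cex_delta.
Proof.
have times t : (1 <= t <= 2)%N -> t = 1%N \/ t = 2%N by lia.
rewrite /Q_relax /Q_constraints /nu /cex_mu1 /cex_muSAS /cex_muSOA /cex_delta /=.
split; first (split; [|split; [|split; [|split; [|split; [|split; [|split; [|split]]]]]]]).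
- by move=> s; lra.
- by move=> t /times [] -> [] [] [] /=; lra.
- by move=> t /times [] -> [] [] [] /=; rewrite ?big_bool /=; lra.
- by move=> t _ o; rewrite big_bool /=; lra.
- by [].
- by move=> t /times [] -> [] /=; rewrite ?big_bool /=; lra.
- by move=> t /times [] -> [] [] /=; rewrite ?big_bool /=; lra.
- by move=> t /times [] -> [] [] [] /=; rewrite ?big_bool /=; lra.
- by move=> t /times [] -> [] [] [] /=; rewrite ?big_bool /=; split; lra.
by move=> t _ o a; apply/andP; split; lra.
Qed.

Lemma cex_no_lifting : ~ exists mu4 : nat -> bool -> bool -> bool -> bool -> bool -> R,
  mu4_nonneg 2%N mu4 /\ VI uniform_pomdp 2%N cex_muSOA cex_muSAS mu4.
Proof.
move=> [mu4 [_ vi]].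
have : cex_muSOA 2%N true false true = cex_muSOA 2%N false false true.
  by apply: (VI_state_blind _ vi) => // s' a'; rewrite /p_cond /=.
by rewrite /cex_muSOA /=; lra.
Qed.

End Counterexample.

Theorem mainTheorem2 (R : realFieldType) :
  (* (1) VI are valid for every feasible solution of the MILP *)
  (forall (S O A : finType) (P : pomdp R S O A) (T : nat), (0 < T)%N ->
    forall (mu1 : S -> R) (muSOA : nat -> S -> O -> A -> R)
           (muSAS : nat -> S -> A -> S -> R) (delta : nat -> O -> A -> R),
      Qd P T mu1 muSOA muSAS delta ->
      exists mu4 : nat -> S -> A -> S -> O -> A -> R,
        mu4_nonneg T mu4 /\ VI P T muSOA muSAS mu4) /\
  (* (2) VI are not implied by the linear relaxation *)
  (exists (S O A : finType) (P : pomdp R S O A) (T : nat)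
          (mu1 : S -> R) (muSOA : nat -> S -> O -> A -> R)
          (muSAS : nat -> S -> A -> S -> R) (delta : nat -> O -> A -> R),
      (0 < T)%N /\ Q_relax P T mu1 muSOA muSAS delta /\
      ~ (exists mu4 : nat -> S -> A -> S -> O -> A -> R,
           mu4_nonneg T mu4 /\ VI P T muSOA muSAS mu4)).
Proof.
split.
- move=> S O A P T _ mu1 muSOA muSAS delta feasible.
  exists (lifted_mu P muSAS delta).
  by split; [exact: lifted_mu_nonneg feasible | exact: lifted_mu_VI feasible].
- exists bool, bool, bool, (uniform_pomdp R), 2%N, (cex_mu1 R), (cex_muSOA R),
    (cex_muSAS R), (cex_delta R).
  by split; [|split; [exact: cex_relaxed | exact: cex_no_lifting]].
Qed.
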